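(* Let $G$ be the final graph of the uncoordinated construction (described in the context) on a finite point set $P\subset\mathbb{R}^d$ with parameter $s>1$, with each edge weighted by its Euclidean length. Then $G$ is a spanner with stretch factor $(s+1)/(s-1)$: for all $p,q\in P$, the shortest path length between $p$ and $q$ in $G$ is at most $\frac{s+1}{s-1}|pq|$.
   Context: Fix $d\ge 1$. Let $P\subset\mathbb{R}^d$ be a finite set of $n\ge 2$ points, $|xy|$ the Euclidean distance, $s>1$. Uncoordinated construction: start with the graph $G$ on vertex set $P$ with no edges. Every ordered pair $(p,q)$ of distinct points of $P$ is processed exactly once, in an arbitrary order, one at a time. When $(p,q)$ is processed, the edge $pq$ is added to $G$ unless $G$ currently contains an edge whose endpoints can be labeled $p',q'$ with $|pp'|\le |p'q'|/(2s+2)$ and $|qq'|\le |p'q'|/(2s+2)$. $G$ is the graph after all pairs are processed. (Equivalently, $G$ consists of the edges $pq$ for the pairs $(p,q)$ selected by the greedy $s$-WSPD algorithm: repeatedly choose an arbitrary pair of points not yet covered, add $(B_r(p),B_r(q))$ with $r=|pq|/(2s+2)$ and $B_r(x)=\{y\in P:|xy|\le r\}$, and mark all pairs $(x,y)$ with $x\in B_r(p)$, $y\in B_r(q)$ as covered.) *)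

From HB Require Import structures.
From mathcomp Require Import all_boot all_order all_algebra.
From mathcomp Require Import reals.
Set Implicit Arguments. Unset Strict Implicit. Unset Printing Implicit Defensive.
Import Order.TTheory GRing.Theory Num.Theory.
Local Open Scope ring_scope.

Section Defs.
Variables (R : realType) (d : nat).
Notation pt := 'rV[R]_d.

Definition edist (x y : pt) : R :=
  Num.sqrt (\sum_(i < d) (x ord0 i - y ord0 i) ^+ 2).

Definition ordered_pairs (P : seq pt) : seq (pt * pt) :=
  [seq pq <- [seq (p, q) | p <- P, q <- P] | pq.1 != pq.2].

Definition blocks (s : R) (e : pt * pt) (p q : pt) : bool :=
  let r := edist e.1 e.2 / (2 * s + 2) in
  ((edist p e.1 <= r) && (edist q e.2 <= r)) ||
  ((edist p e.2 <= r) && (edist q e.1 <= r)).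

Definition step (s : R) (G : seq (pt * pt)) (pq : pt * pt) : seq (pt * pt) :=
  if has (fun e => blocks s e pq.1 pq.2) G then G else rcons G pq.

Definition uncoordinated (s : R) (order : seq (pt * pt)) : seq (pt * pt) :=
  foldl (step s) [::] order.

Definition adj (G : seq (pt * pt)) : rel pt :=
  fun a b => ((a, b) \in G) || ((b, a) \in G).

Definition walk_len (x : pt) (w : seq pt) : R :=
  \sum_(e <- zip (x :: w) w) edist e.1 e.2.

End Defs.

From HB Require Import structures.
From mathcomp Require Import all_boot all_order all_algebra.
From mathcomp Require Import reals.
From mathcomp Require Import ring lra.
Import Order.TTheory GRing.Theory Num.Theory.
Local Open Scope ring_scope.

(* Induction on |pq|.  If pq is an edge of G we are done.  Otherwise an edge
   p'q' of G blocks (p,q): |pp'|, |qq'| <= |p'q'|/(2s+2).  As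
   |p'q'| <= |pp'| + |pq| + |qq'|, both |pp'| and |qq'| are shorter than |pq|,
   so by induction there are walks p ~> p' and q' ~> q of lengths at most
   t|pp'| and t|q'q|, t = (s+1)/(s-1), and the walk p ~> p' - q' ~> q has
   length at most t|pq|. *)

Set Implicit Arguments.
Unset Strict Implicit.
Unset Printing Implicit Defensive.

Lemma sum_mul_sqr_le (R : realDomainType) (n : nat) (a b : 'I_n -> R) :
  (\sum_i a i * b i) ^+ 2 <= (\sum_i a i ^+ 2) * (\sum_i b i ^+ 2).
Proof.
set A := \sum_i a i ^+ 2; set B := \sum_i b i ^+ 2; set C := \sum_i a i * b i.
have lagrange_ge0 : 0 <= \sum_i \sum_j (a i * b j - a j * b i) ^+ 2.
  by do 2!apply: sumr_ge0 => ? _; apply: sqr_ge0.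
have expand : \sum_i \sum_j (a i * b j - a j * b i) ^+ 2 =
    \sum_i \sum_j (a i ^+ 2 * b j ^+ 2) + \sum_i \sum_j (a j ^+ 2 * b i ^+ 2)
    - 2 * \sum_i \sum_j (a i * b i * (a j * b j)).
  rewrite -big_split /= mulr_sumr -sumrB; apply: eq_bigr => i _.
  by rewrite -big_split /= mulr_sumr -sumrB; apply: eq_bigr => j _; ring.
have AB1 : \sum_i \sum_j (a i ^+ 2 * b j ^+ 2) = A * B.
  by rewrite mulr_suml; apply: eq_bigr => i _; rewrite mulr_sumr.
have AB2 : \sum_i \sum_j (a j ^+ 2 * b i ^+ 2) = A * B.
  rewrite mulrC mulr_suml; apply: eq_bigr => i _.
  by rewrite mulr_sumr; apply: eq_bigr => j _; rewrite mulrC.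
have CC : \sum_i \sum_j (a i * b i * (a j * b j)) = C ^+ 2.
  by rewrite expr2 mulr_suml; apply: eq_bigr => i _; rewrite mulr_sumr.
by move: lagrange_ge0; rewrite expand AB1 AB2 CC; lra.
Qed.

Lemma sub_count_lt (T : eqType) (a b : pred T) (l : seq T) :
  subpred a b -> (exists2 z, z \in l & b z && ~~ a z) ->
  (count a l < count b l)%N.
Proof.
move=> sab; elim: l => [|x l IHl] [z] //; rewrite in_cons => /orP[/eqP-> | zl] bz /=.
  by case/andP: bz => -> /negbTE->; rewrite ltnS sub_count.
have := IHl (ex_intro2 _ _ z zl bz).
by case ax: (a x); [rewrite (sab _ ax) ltn_add2l | move/leq_trans->; rewrite ?leq_addl].
Qed.

Lemma measure_ind_in (T : eqType) (disp : Order.disp_t) (M : porderType disp)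
    (A : seq T) (m : T -> M) (Q : T -> Prop) :
  (forall x, x \in A -> (forall y, y \in A -> (m y < m x)%O -> Q y) -> Q x) ->
  forall x, x \in A -> Q x.
Proof.
move=> IH x; have [n] := ubnP (count (fun y => m y < m x)%O A).
elim: n x => [//|n IHn] x lt_x_n xA.
apply: IH => // y yA lt_yx; apply: IHn => //.
rewrite -ltnS (leq_trans _ lt_x_n) // ltnS; apply: sub_count_lt => [z /lt_trans|]; first exact.
by exists y; rewrite // lt_yx ltxx.
Qed.

Section Edist.
Variables (R : realType) (d : nat).
Implicit Types x y z : 'rV[R]_d.

Lemma edist_ge0 x y : 0 <= edist x y.
Proof. exact: sqrtr_ge0. Qed.

Lemma edistC x y : edist x y = edist y x.
Proof. by rewrite /edist; congr Num.sqrt; apply: eq_bigr => i _; rewrite -sqrrN opprB. Qed.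

Lemma edistxx x : edist x x = 0.
Proof. by rewrite /edist big1 ?sqrtr0 // => i _; rewrite subrr expr0n. Qed.

Lemma edist_eq0 x y : (edist x y == 0) = (x == y).
Proof.
apply/idP/eqP => [|->]; last by rewrite edistxx.
rewrite sqrtr_eq0 => le0; apply/rowP => i.
have : \sum_(j < d) (x ord0 j - y ord0 j) ^+ 2 == 0.
  by rewrite eq_le le0 sumr_ge0 // => j _; apply: sqr_ge0.
rewrite psumr_eq0 => [/allP/(_ i (mem_index_enum i))|j _]; last exact: sqr_ge0.
by rewrite /= sqrf_eq0 subr_eq0 => /eqP.
Qed.

Lemma edist_triangle x y z : edist x z <= edist x y + edist y z.
Proof.
rewrite /edist.
set a := fun i => x ord0 i - y ord0 i; set b := fun i => y ord0 i - z ord0 i.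
set A := \sum_i a i ^+ 2; set B := \sum_i b i ^+ 2.
have expand : \sum_(i < d) (x ord0 i - z ord0 i) ^+ 2 = A + B + 2 * \sum_i a i * b i.
  rewrite /A /B -!big_split mulr_sumr -big_split /=.
  by apply: eq_bigr => i _; rewrite /a /b; ring.
have A_ge0 : 0 <= A by apply: sumr_ge0 => i _; apply: sqr_ge0.
have B_ge0 : 0 <= B by apply: sumr_ge0 => i _; apply: sqr_ge0.
have cs : \sum_i a i * b i <= Num.sqrt A * Num.sqrt B.
  rewrite -sqrtrM // (le_trans (ler_norm _)) // -sqrtr_sqr ler_sqrt ?mulr_ge0 //.
  exact: sum_mul_sqr_le.
have sqrtAB_ge0 : 0 <= Num.sqrt A + Num.sqrt B by rewrite addr_ge0 ?sqrtr_ge0.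
rewrite -[_ + _]ger0_norm // -sqrtr_sqr ler_sqrt ?sqr_ge0 // expand sqrrD !sqr_sqrtr //.
by move: (mulr_ge0 (sqrtr_ge0 A) (sqrtr_ge0 B)); lra.
Qed.

End Edist.

Section Construction.
Variables (R : realType) (d : nat) (s : R).
Notation pt := 'rV[R]_d.
Implicit Types (G order : seq (pt * pt)) (p q : pt).

Lemma foldl_step_subset G order : {subset G <= foldl (step s) G order}.
Proof.
elim: order G => [|pq order IH] G //= e eG; apply: IH.
by rewrite /step; case: ifP => // _; rewrite mem_rcons in_cons eG orbT.
Qed.

Lemma mem_foldl_step G order e :
  e \in foldl (step s) G order -> (e \in G) || (e \in order).
Proof.
elim: order G => [|pq order IH] G /=; first by move->.
move/IH; rewrite in_cons /step; case: ifP => _; first by case/orP=> ->; rewrite ?orbT.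
by rewrite mem_rcons in_cons; case/orP => [/orP[]|] ->; rewrite ?orbT.
Qed.

Lemma foldl_step_cover G order pq : pq \in order ->
  let G' := foldl (step s) G order in
  (pq \in G') \/ exists2 e, e \in G' & blocks s e pq.1 pq.2.
Proof.
elim: order G => [|pq' order IH] G //; rewrite in_cons => /orP[/eqP<- | pq_order];
  last exact: IH.
rewrite /= /step; case: ifP => [/hasP[e eG bl] | _]; last first.
  by left; apply: foldl_step_subset; rewrite mem_rcons mem_head.
by right; exists e => //; apply: foldl_step_subset.
Qed.

Lemma blocks_oriented G e p q : 1 < s -> e \in G -> blocks s e p q ->
  exists p' q', [/\ adj G p' q', (p', q') = e \/ (q', p') = e,
    edist p p' * (2 * s + 2) <= edist p' q' &
    edist q q' * (2 * s + 2) <= edist p' q'].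
Proof.
case: e => a b s_gt1 eG; have s2_gt0 : 0 < 2 * s + 2 by lra.
rewrite /blocks /= !ler_pdivlMr // => /orP[] /andP[pa qb].
  by exists a, b; split; rewrite /adj ?eG ?(edistC b a) //; left.
by exists b, a; rewrite !(edistC b a); split; rewrite /adj ?eG ?orbT //; right.
Qed.

End Construction.

Section Walks.
Variables (R : realType) (d : nat).
Notation pt := 'rV[R]_d.
Implicit Types (G : seq (pt * pt)) (p q x : pt) (w : seq pt).

Lemma walk_len_nil x : walk_len x [::] = 0.
Proof. by rewrite /walk_len big_nil. Qed.

Lemma walk_len_cons x y w : walk_len x (y :: w) = edist x y + walk_len y w.
Proof. by rewrite /walk_len /= big_cons. Qed.

Lemma walk_len_cat x w1 w2 :
  walk_len x (w1 ++ w2) = walk_len x w1 + walk_len (last x w1) w2.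
Proof.
elim: w1 x => [|y w1 IH] x /=; first by rewrite walk_len_nil add0r.
by rewrite !walk_len_cons IH addrA.
Qed.

Definition stretch_walk G (t : R) p q := exists w,
  [/\ path (adj G) p w, last p w = q & walk_len p w <= t * edist p q].

Lemma stretch_walk_refl G t p : stretch_walk G t p p.
Proof. by exists [::]; rewrite walk_len_nil edistxx mulr0. Qed.

Lemma stretch_walk_edge G t p q : 1 <= t -> adj G p q -> stretch_walk G t p q.
Proof.
move=> t_ge1 pq; exists [:: q]; rewrite /= pq walk_len_cons walk_len_nil addr0.
by split => //; rewrite ler_peMl ?edist_ge0.
Qed.

Lemma stretch_walk_detour G t p p' q' q :
  stretch_walk G t p p' -> adj G p' q' -> stretch_walk G t q' q ->
  t * edist p p' + edist p' q' + t * edist q' q <= t * edist p q ->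
  stretch_walk G t p q.
Proof.
move=> [w1 [pw1 <- lw1]] p'q' [w2 [pw2 <- lw2]] detour.
exists (w1 ++ q' :: w2); split.
- by rewrite cat_path pw1 /= p'q'.
- by rewrite last_cat.
- rewrite walk_len_cat walk_len_cons (le_trans _ detour) //.
  by rewrite addrA lerD ?lerD2r.
Qed.

End Walks.

Lemma detour_bound (R : realFieldType) (s a b D L : R) :
  1 < s -> 0 < D -> 0 <= a -> 0 <= b ->
  a * (2 * s + 2) <= L -> b * (2 * s + 2) <= L -> L <= a + D + b ->
  let t := (s + 1) / (s - 1) in
  [/\ a < D, b < D & t * a + L + t * b <= t * D].
Proof.
move=> s_gt1 D_gt0 a_ge0 b_ge0 aL bL LD t.
(* Both inequalities come down to s (a + b) <= D. *)
have sab : s * (a + b) <= D by nra.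
split; [nra | nra |].
have s1_gt0 : 0 < s - 1 by rewrite subr_gt0.
have t_s1 : t * (s - 1) = s + 1 by rewrite /t divfK ?gt_eqF.
rewrite -(ler_pM2r s1_gt0) !mulrDl mulrAC t_s1 -[t * D * _]mulrAC t_s1.
by rewrite mulrAC t_s1; nra.
Qed.

Section Spanner.
Variables (R : realType) (d : nat) (P : seq 'rV[R]_d) (s : R)
  (order : seq ('rV[R]_d * 'rV[R]_d)).
Hypotheses (s_gt1 : 1 < s) (order_pairs : perm_eq order (ordered_pairs P)).

Let G := uncoordinated s order.
Let t := (s + 1) / (s - 1).

Lemma uncoordinated_edge_in e : e \in G -> (e.1 \in P) && (e.2 \in P).
Proof.
move=> eG; move: (mem_foldl_step eG); rewrite in_nil (perm_mem order_pairs) mem_filter.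
by case/andP=> _ /allpairsP[[x y] [xP yP ->]]; rewrite xP yP.
Qed.

Lemma stretch_walk_induction_step p q : p \in P -> q \in P ->
  (forall x y, x \in P -> y \in P -> edist x y < edist p q -> stretch_walk G t x y) ->
  stretch_walk G t p q.
Proof.
move=> pP qP IH; have [<-|neq_pq] := eqVneq p q; first exact: stretch_walk_refl.
have pq_order : (p, q) \in order.
  by rewrite (perm_mem order_pairs) mem_filter neq_pq allpairs_f.
have t_ge1 : 1 <= t by rewrite ler_pdivlMr ?subr_gt0 //; lra.
have [pqG | [e eG bl]] := foldl_step_cover s [::] pq_order.
  by apply: stretch_walk_edge; rewrite // /adj pqG.
have [p' [q' [p'q' e_or pp' qq']]] := blocks_oriented s_gt1 eG bl.
have /andP[p'P q'P] : (p' \in P) && (q' \in P).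
  by case: e_or eG => <- /uncoordinated_edge_in //=; rewrite andbC.
have D_gt0 : 0 < edist p q by rewrite lt_def edist_eq0 neq_pq edist_ge0.
have LD : edist p' q' <= edist p p' + edist p q + edist q q'.
  have := edist_triangle p' p q'; have := edist_triangle p q q'.
  by rewrite (edistC p' p); lra.
have [pp'_lt qq'_lt bound] :=
  detour_bound s_gt1 D_gt0 (edist_ge0 _ _) (edist_ge0 _ _) pp' qq' LD.
apply: (stretch_walk_detour (IH p p' _ _ pp'_lt) p'q') => //.
  by apply: IH => //; rewrite edistC.
by rewrite (edistC q').
Qed.

Lemma uncoordinated_stretch p q : p \in P -> q \in P -> stretch_walk G t p q.
Proof.
move=> pP qP.
pose A := [seq (x, y) | x <- P, y <- P].
suff : forall z, z \in A -> stretch_walk G t z.1 z.2.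
  by move/(_ (p, q)); apply; apply: allpairs_f.
apply: (measure_ind_in (m := fun z => edist z.1 z.2)) => _ /allpairsP[[x y] [xP yP ->]] IH.
apply: stretch_walk_induction_step => // x' y' x'P y'P lt_xy.
exact: (IH (x', y') (allpairs_f _ x'P y'P)).
Qed.

End Spanner.

Theorem theorem5 (R : realType) (d : nat) (P : seq 'rV[R]_d) (s : R)
    (order : seq ('rV[R]_d * 'rV[R]_d)) :
  (1 <= d)%N -> uniq P -> (2 <= size P)%N -> 1 < s ->
  perm_eq order (ordered_pairs P) ->
  forall p q, p \in P -> q \in P ->
  exists w : seq 'rV[R]_d,
    [/\ path (adj (uncoordinated s order)) p w, last p w = q &
        walk_len p w <= (s + 1) / (s - 1) * edist p q].
Proof. by move=> _ _ _ s_gt1 order_pairs; apply: uncoordinated_stretch. Qed.
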